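(* Let $0<\rho<\frac12$. There is no constant $C>0$ such that for all $t\ge1$ and all Schwartz functions $\varphi$ with $\hat\varphi$ compactly supported in $(0,\infty)$, $$\|\partial_x\varphi\|_{L^\infty}\le C\Big(t^{-1/2}\|x\partial_xU(-t)\varphi\|_{L^2}^{\frac12+\rho}\|U(-t)\varphi\|_{H^{\frac{2-2\rho}{1-2\rho}}}^{\frac12-\rho}+t^{-1/2}\|U(-t)\varphi\|_{H^{5/2}}\Big).$$ In particular, the inequality with $\|\langle i\partial_x\rangle\varphi\|_{L^\infty}$ on the left-hand side (as in Lemma 3.3 of Hayashi–Naumkin) fails as well.
   Context: $\partial_x^{-1}:=\mathcal F^{-1}\frac1{i\xi}\mathcal F$, and $U(t):=e^{t\partial_x^{-1}}$ is the Fourier multiplier with symbol $e^{t/(i\xi)}$ (the free propagator of $u_{tx}=u$). $\|f\|_{H^s}=\|\langle\xi\rangle^s\hat f\|_{L^2}$, $\langle\xi\rangle=(1+\xi^2)^{1/2}$. *)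

(* classical reals. Complex numbers are represented by pairs
   (real part, imaginary part) of real-valued functions. *)
From Stdlib Require Import Reals Lra ClassicalEpsilon.
Open Scope R_scope.

(* Riemann integral over [a,b] of f (value chosen classically; it is the
   RiemannInt whenever f is Riemann integrable, which is proof-independent). *)
Definition Rint (f : R -> R) (a b : R) : R :=
  epsilon (inhabits 0)
    (fun I => exists pr : Riemann_integrable f a b, RiemannInt pr = I).

(* D 0 is C^infinity, with D n its n-th derivative. *)
Definition smooth_tower (D : nat -> R -> R) : Prop :=
  forall (n : nat) (x : R), derivable_pt_lim (D n) x (D (S n) x).

Definition cmod (u v : R) : R := sqrt (u ^ 2 + v ^ 2).

Definition rpow (x y : R) : R := if Rle_dec x 0 then 0 else Rpower x y.

(* Inverse Fourier transform (1/2pi) int w(xi) e^{i x xi} dxi of a function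
   w = wr + i wi supported in [a,b]: real and imaginary parts. *)
Definition invF_re (a b : R) (wr wi : R -> R) (x : R) : R :=
  / (2 * PI) * Rint (fun xi => wr xi * cos (x * xi) - wi xi * sin (x * xi)) a b.
Definition invF_im (a b : R) (wr wi : R -> R) (x : R) : R :=
  / (2 * PI) * Rint (fun xi => wr xi * sin (x * xi) + wi xi * cos (x * xi)) a b.

(* Fourier transform of U(-t)phi: e^{-t/(i xi)} phihat(xi) = e^{i t/xi} phihat(xi) *)
Definition prop_re (t : R) (gr gi : R -> R) (xi : R) : R :=
  cos (t / xi) * gr xi - sin (t / xi) * gi xi.
Definition prop_im (t : R) (gr gi : R -> R) (xi : R) : R :=
  sin (t / xi) * gr xi + cos (t / xi) * gi xi.

(* H^s norm ||<xi>^s fhat||_{L^2} for fhat = fr + i fi supported in [a,b] *)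
Definition Hs_norm (a b s : R) (fr fi : R -> R) : R :=
  sqrt (Rint (fun xi => Rpower (1 + xi ^ 2) s * (fr xi ^ 2 + fi xi ^ 2)) a b).

(* Fourier-side L^2 norm (no normalisation) of hr + i hi on [a,b] *)
Definition L2_norm (a b : R) (hr hi : R -> R) : R :=
  sqrt (Rint (fun xi => hr xi ^ 2 + hi xi ^ 2) a b).

Definition jb (xi : R) : R := sqrt (1 + xi ^ 2).

From Stdlib Require Import Reals Lra Lia ClassicalEpsilon FunctionalExtensionality List.
From Coquelicot Require Import Coquelicot.
Open Scope R_scope.

(** Take phi^(xi) = Psi(xi) e^{i N^3 xi}, where Psi(xi) = beta(N (xi - N)) is a smooth bump with
    0 <= Psi <= 1 supported in [N, N + 1/N], and take t = N^5, x = -N^3.  At this point the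
    modulation cancels against e^{i x xi}, so Im d_x phi(x) and Re <i d_x> phi(x) are (2 pi)^{-1}
    times the integrals of xi Psi and <xi> Psi; since Psi >= e^{-8} on the middle half of its
    support, both are at least e^{-8} / (4 pi), uniformly in N.  On the other hand the Fourier
    transform of U(-t) phi is Psi e^{i theta} with theta(xi) = N^5 / xi + N^3 xi, and
    theta' = N^3 - N^5 / xi^2 is O(N) on the support.  Hence ||x d_x U(-t) phi||_{L^2} = O(N^{3/2})
    and ||U(-t) phi||_{H^s} = O(N^{s - 1/2}), so the right-hand side is O(N^{rho - 1} + N^{-1/2}),
    which tends to 0. *)

(** * Smooth towers *)

Lemma is_derive_eq (f : R -> R) (x l l' : R) : is_derive f x l -> l = l' -> is_derive f x l'.
Proof. now intros H <-. Qed.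

Lemma continuity_pt_of_ex_derive (f : R -> R) x : ex_derive f x -> continuity_pt f x.
Proof. intros H. now apply continuity_pt_filterlim, (ex_derive_continuous (V := R_NormedModule)). Qed.

Lemma smooth_tower_is_derive (D : nat -> R -> R) n x :
  smooth_tower D -> is_derive (D n) x (D (S n) x).
Proof. intros HD. apply is_derive_Reals, HD. Qed.

Lemma smooth_tower_ex_derive (D : nat -> R -> R) n x :
  smooth_tower D -> ex_derive (D n) x.
Proof. intros HD. exists (D (S n) x). now apply smooth_tower_is_derive. Qed.

Lemma Derive_smooth_tower (D : nat -> R -> R) n x :
  smooth_tower D -> Derive (fun z => D n z) x = D (S n) x.
Proof. intros HD. now apply is_derive_unique, smooth_tower_is_derive. Qed.

Lemma smooth_tower_continuous (D : nat -> R -> R) n z : smooth_tower D -> continuity_pt (D n) z.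
Proof. intros HD. now apply continuity_pt_of_ex_derive, smooth_tower_ex_derive. Qed.

Section LinearCombinationTower.

Variables (I : Type) (B : I -> R -> R) (dB : I -> list (R * I)).

(* A list [(c1, i1); ...] stands for c1 B i1 + ...; [dB i] is the derivative of [B i] in this form. *)
Fixpoint lincomb (l : list (R * I)) (x : R) : R :=
  match l with
  | nil => 0
  | (c, i) :: l' => c * B i x + lincomb l' x
  end.

Definition lincomb_deriv (l : list (R * I)) : list (R * I) :=
  flat_map (fun p => map (fun q => (fst p * fst q, snd q)) (dB (snd p))) l.

Hypothesis is_derive_basis : forall i x, is_derive (B i) x (lincomb (dB i) x).

Lemma lincomb_app l1 l2 x : lincomb (l1 ++ l2) x = lincomb l1 x + lincomb l2 x.
Proof. induction l1 as [|[c i] l IH]; simpl; [ring | rewrite IH; ring]. Qed.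

Lemma lincomb_scale c l x :
  lincomb (map (fun q => (c * fst q, snd q)) l) x = c * lincomb l x.
Proof. induction l as [|[c' i] l IH]; simpl; [ring | rewrite IH; ring]. Qed.

Lemma is_derive_lincomb l x : is_derive (lincomb l) x (lincomb (lincomb_deriv l) x).
Proof.
  induction l as [|[c i] l IH]; simpl.
  - apply (is_derive_const 0 x).
  - unfold lincomb_deriv in *; simpl. rewrite lincomb_app, lincomb_scale.
    apply (is_derive_plus (fun x => c * B i x) (lincomb l)); [apply is_derive_scal|]; auto.
Qed.

Definition lincomb_tower (l : list (R * I)) (n : nat) : R -> R :=
  lincomb (Nat.iter n lincomb_deriv l).

Lemma lincomb_tower_smooth l : smooth_tower (lincomb_tower l).
Proof. intros n x. apply is_derive_Reals, is_derive_lincomb. Qed.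

Lemma lincomb_tower_single i x : lincomb_tower ((1, i) :: nil) 0 x = B i x.
Proof. unfold lincomb_tower; simpl; ring. Qed.

End LinearCombinationTower.

Arguments lincomb {I}.
Arguments lincomb_tower {I}.

(* Leibniz rule: the basis indexed by (i, j) is F^(i) G^(j). *)
Definition mul_tower (F G : nat -> R -> R) : nat -> R -> R :=
  lincomb_tower (fun p x => F (fst p) x * G (snd p) x)
    (fun p => (1, (S (fst p), snd p)) :: (1, (fst p, S (snd p))) :: nil)
    ((1, (0%nat, 0%nat)) :: nil).

Lemma mul_tower_smooth F G :
  smooth_tower F -> smooth_tower G -> smooth_tower (mul_tower F G).
Proof.
  intros HF HG. apply lincomb_tower_smooth. intros [i j] x; simpl.
  eapply is_derive_eq.
  - apply (is_derive_mult (fun x => F i x) (fun x => G j x));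
      try apply smooth_tower_is_derive; auto. intros; apply Rmult_comm.
  - unfold plus, mult; simpl. ring.
Qed.

Lemma mul_tower0 F G x : mul_tower F G 0 x = F 0%nat x * G 0%nat x.
Proof. apply lincomb_tower_single. Qed.

Definition affine_tower (s c : R) (F : nat -> R -> R) (n : nat) (x : R) : R :=
  s ^ n * F n (s * x + c).

Lemma affine_tower_smooth s c F : smooth_tower F -> smooth_tower (affine_tower s c F).
Proof.
  intros HF n x. apply is_derive_Reals. unfold affine_tower.
  eapply is_derive_eq.
  - apply is_derive_scal, (is_derive_comp (F n) (fun x => s * x + c)).
    + now apply smooth_tower_is_derive.
    + auto_derive; reflexivity.
  - unfold scal; simpl; unfold mult; simpl. ring.
Qed.

Lemma affine_tower0 s c F x : affine_tower s c F 0 x = F 0%nat (s * x + c).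
Proof. unfold affine_tower; simpl; ring. Qed.

Definition cos_tower (n : nat) (x : R) : R := cos (x + INR n * (PI / 2)).

Lemma cos_tower_smooth : smooth_tower cos_tower.
Proof.
  intros n x. apply is_derive_Reals. unfold cos_tower.
  eapply is_derive_eq; [auto_derive; reflexivity|].
  rewrite S_INR, Rmult_plus_distr_r, <- Rplus_assoc, cos_plus, (Rmult_1_l (PI / 2)), cos_PI2, sin_PI2.
  ring.
Qed.

Lemma cos_tower0 x : cos_tower 0 x = cos x.
Proof. unfold cos_tower; simpl. now rewrite Rmult_0_l, Rplus_0_r. Qed.

Lemma cos_sub_PI2 x : cos (x - PI / 2) = sin x.
Proof. now rewrite <- cos_neg, Ropp_minus_distr, cos_shift. Qed.

(** * A smooth bump *)

Definition flat_exp (k : nat) (x : R) : R :=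
  if Rlt_dec 0 x then exp (- / x) * (/ x) ^ k else 0.

(* (e^{-1/x} x^{-k})' = -k e^{-1/x} x^{-k-1} + e^{-1/x} x^{-k-2}. *)
Definition flat_exp_deriv (k : nat) : list (R * nat) :=
  (- INR k, S k) :: (1, S (S k)) :: nil.

Lemma pow_le_exp_mul z m : 0 <= z -> z ^ m <= exp (INR m * z).
Proof.
  intros Hz. induction m as [|m IH].
  - simpl. rewrite Rmult_0_l, exp_0. lra.
  - rewrite S_INR, Rmult_plus_distr_r, Rmult_1_l, Rplus_comm, exp_plus. simpl.
    apply Rmult_le_compat; auto using pow_le.
    destruct (Req_dec z 0) as [->|Hnz]; [rewrite exp_0; lra|].
    pose proof (exp_ineq1 z Hnz). lra.
Qed.

Lemma flat_exp_sqr_bound k h : Rabs (flat_exp k h) <= INR (S (S k)) ^ S (S k) * h ^ 2.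
Proof.
  set (m := S (S k)).
  assert (Hm : 0 < INR m) by (apply lt_0_INR; unfold m; lia).
  assert (HK : 0 <= INR m ^ m * h ^ 2) by (apply Rmult_le_pos; [apply pow_le; lra | apply pow2_ge_0]).
  unfold flat_exp. destruct (Rlt_dec 0 h) as [Hh|Hh]; [|rewrite Rabs_R0; exact HK].
  set (y := / h). assert (Hy : 0 < y) by (apply Rinv_0_lt_compat; lra).
  assert (Hyh : y * h = 1) by (unfold y; field; lra). clearbody y.
  assert (Hexp : y ^ m <= INR m ^ m * exp y).
  { pose proof (pow_le_exp_mul (y / INR m) m) as Hp.
    replace (INR m * (y / INR m)) with y in Hp by (field; lra).
    replace (y ^ m) with (INR m ^ m * (y / INR m) ^ m)
      by (rewrite <- Rpow_mult_distr; f_equal; field; lra).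
    apply Rmult_le_compat_l; [apply pow_le; lra|]. apply Hp. apply Rlt_le, Rdiv_lt_0_compat; lra. }
  replace (exp (- y) * y ^ k) with (exp (- y) * y ^ m * h ^ 2)
    by (transitivity (exp (- y) * y ^ k * (y * h) ^ 2); [unfold m; simpl; ring | rewrite Hyh; ring]).
  rewrite Rabs_right by (apply Rle_ge, Rmult_le_pos;
    [apply Rmult_le_pos; [apply Rlt_le, exp_pos | apply pow_le; lra] | apply pow2_ge_0]).
  apply Rmult_le_compat_r; [apply pow2_ge_0|].
  rewrite exp_Ropp. apply (Rmult_le_reg_l (exp y)); [apply exp_pos|].
  rewrite <- Rmult_assoc, Rinv_r, Rmult_1_l, Rmult_comm by apply Rgt_not_eq, exp_pos.
  exact Hexp.
Qed.

Lemma is_derive_0_of_sqr_bound (f : R -> R) (K : R) :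
  (forall h, Rabs (f h) <= K * h ^ 2) -> is_derive f 0 0.
Proof.
  intros Hf. apply is_derive_Reals. intros eps Heps.
  assert (HK : 0 <= K) by (specialize (Hf 1); pose proof (Rabs_pos (f 1)); simpl in Hf; lra).
  assert (Hf0 : f 0 = 0)
    by (specialize (Hf 0); apply Rabs_eq_0; pose proof (Rabs_pos (f 0)); simpl in Hf; nra).
  exists (mkposreal (eps / (K + 1)) ltac:(apply Rdiv_lt_0_compat; lra)).
  intros h Hh0 Hh. simpl in Hh. rewrite Rplus_0_l, Hf0, Rminus_0_r, Rminus_0_r.
  assert (Hah : 0 < Rabs h) by now apply Rabs_pos_lt.
  unfold Rdiv. rewrite Rabs_mult, Rabs_inv.
  apply (Rmult_lt_reg_r (Rabs h)); [exact Hah|].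
  rewrite Rmult_assoc, Rinv_l, Rmult_1_r by lra.
  apply Rle_lt_trans with (K * Rabs h * Rabs h).
  - replace (K * Rabs h * Rabs h) with (K * Rabs h ^ 2) by ring.
    rewrite pow2_abs. apply Hf.
  - apply Rmult_lt_compat_r; [exact Hah|].
    apply Rle_lt_trans with ((K + 1) * Rabs h); [nra|].
    apply (Rmult_lt_reg_l (/ (K + 1))); [apply Rinv_0_lt_compat; lra|].
    replace (/ (K + 1) * ((K + 1) * Rabs h)) with (Rabs h) by (field; lra).
    replace (/ (K + 1) * eps) with (eps / (K + 1)) by (unfold Rdiv; ring). exact Hh.
Qed.

Lemma is_derive_flat_exp k x : is_derive (flat_exp k) x (lincomb flat_exp (flat_exp_deriv k) x).
Proof.
  simpl. destruct (Rtotal_order x 0) as [Hx|[->|Hx]].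
  - apply (is_derive_ext_loc (fun _ => 0)).
    + apply (filter_imp (fun u => u < 0)); [|exact (open_lt 0 x Hx)].
      intros u Hu. unfold flat_exp. destruct (Rlt_dec 0 u); [lra | reflexivity].
    + eapply is_derive_eq; [apply (is_derive_const 0 x)|].
      unfold flat_exp. destruct (Rlt_dec 0 x); [lra|]. unfold zero; simpl. ring.
  - eapply is_derive_eq; [apply (is_derive_0_of_sqr_bound _ _ (flat_exp_sqr_bound k))|].
    unfold flat_exp. destruct (Rlt_dec 0 0); [lra|]. ring.
  - apply (is_derive_ext_loc (fun z => exp (- / z) * (/ z) ^ k)).
    + apply (filter_imp (fun u => 0 < u)); [|exact (open_gt 0 x Hx)].
      intros u Hu. unfold flat_exp. destruct (Rlt_dec 0 u); [reflexivity | lra].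
    + eapply is_derive_eq; [auto_derive; [lra | reflexivity]|].
      unfold flat_exp. destruct (Rlt_dec 0 x) as [_|]; [|lra].
      destruct k as [|k]; simpl; field; lra.
Qed.

Definition flat_tower : nat -> R -> R :=
  lincomb_tower flat_exp flat_exp_deriv ((1, 0%nat) :: nil).

Lemma flat_tower_smooth : smooth_tower flat_tower.
Proof. apply lincomb_tower_smooth, is_derive_flat_exp. Qed.

Lemma flat_exp0 x : flat_exp 0 x = if Rlt_dec 0 x then exp (- / x) else 0.
Proof. unfold flat_exp. destruct Rlt_dec; simpl; ring. Qed.

Lemma flat_exp0_range x : 0 <= flat_exp 0 x <= 1.
Proof.
  rewrite flat_exp0. destruct Rlt_dec as [Hx|]; [|lra].
  split; [apply Rlt_le, exp_pos|]. rewrite <- exp_0. apply Rlt_le, exp_increasing.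
  assert (0 < / x) by (apply Rinv_0_lt_compat; lra). lra.
Qed.

Lemma flat_exp0_ge y : 1 / 4 <= y -> exp (-4) <= flat_exp 0 y.
Proof.
  intros Hy. rewrite flat_exp0. destruct Rlt_dec; [|lra].
  destruct (Req_dec y (1 / 4)) as [->|Hne].
  - right. f_equal. field.
  - assert (/ y < / (1 / 4)) by (apply Rinv_lt_contravar; lra).
    apply Rlt_le, exp_increasing. lra.
Qed.

Definition bump : nat -> R -> R := mul_tower flat_tower (affine_tower (-1) 1 flat_tower).

Lemma bump_smooth : smooth_tower bump.
Proof. apply mul_tower_smooth, affine_tower_smooth; apply flat_tower_smooth. Qed.

Lemma bump0 y : bump 0 y = flat_exp 0 y * flat_exp 0 (1 - y).
Proof.
  unfold bump. rewrite mul_tower0, affine_tower0. unfold flat_tower.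
  rewrite !lincomb_tower_single. do 2 f_equal. ring.
Qed.

Lemma bump_range y : 0 <= bump 0 y <= 1.
Proof.
  rewrite bump0. pose proof (flat_exp0_range y). pose proof (flat_exp0_range (1 - y)). split; nra.
Qed.

Lemma bump_eq0 y : y <= 0 \/ 1 <= y -> bump 0 y = 0.
Proof.
  intros H. rewrite bump0, !flat_exp0.
  destruct (Rlt_dec 0 y); destruct (Rlt_dec 0 (1 - y)); try ring. lra.
Qed.

Lemma bump_ge y : 1 / 4 <= y <= 3 / 4 -> exp (-8) <= bump 0 y.
Proof.
  intros Hy. rewrite bump0. replace (-8) with (-4 + -4) by ring. rewrite exp_plus.
  pose proof (flat_exp0_ge y ltac:(lra)). pose proof (flat_exp0_ge (1 - y) ltac:(lra)).
  pose proof (exp_pos (-4)). apply Rmult_le_compat; lra.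
Qed.

Lemma bump_deriv_bounded : exists M, forall y, 0 <= y <= 1 -> Rabs (bump 1 y) <= M.
Proof.
  destruct (continuity_ab_maj (fun y => Rabs (bump 1 y)) 0 1) as [m [Hm _]]; [lra| |].
  - intros c _. apply (continuity_pt_comp (bump 1) Rabs), Rcontinuity_abs.
    apply smooth_tower_continuous, bump_smooth.
  - exists (Rabs (bump 1 m)). exact Hm.
Qed.

(** * Integrals *)

Lemma ex_RInt_of_continuity (f : R -> R) a b :
  (forall z, Rmin a b <= z <= Rmax a b -> continuity_pt f z) -> ex_RInt f a b.
Proof.
  intros H. apply (ex_RInt_continuous (V := R_CompleteNormedModule)).
  intros z Hz. now apply continuity_pt_filterlim, H.
Qed.

Lemma Rint_RInt (f : R -> R) a b : ex_RInt f a b -> Rint f a b = RInt f a b.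
Proof.
  intros H. pose proof (ex_RInt_Reals_0 f a b H) as pr.
  assert (Hex : exists I, exists pr : Riemann_integrable f a b, RiemannInt pr = I)
    by (exists (RiemannInt pr), pr; reflexivity).
  unfold Rint. destruct (epsilon_spec (inhabits 0) _ Hex) as [pr' <-].
  symmetry. apply RInt_Reals.
Qed.

Lemma ex_RInt_cos_sin (u v : R -> R) a b y :
  (forall z, continuity_pt u z) -> (forall z, continuity_pt v z) ->
  ex_RInt (fun xi => u xi * cos (y * xi) - v xi * sin (y * xi)) a b.
Proof.
  intros Hu Hv. apply ex_RInt_of_continuity. intros z _.
    apply continuity_pt_minus; apply continuity_pt_mult; auto;
      apply continuity_pt_of_ex_derive; auto_derive; exact I.
Qed.

Lemma is_derive_RInt_cos_sin (u v : R -> R) a b x :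
  (forall z, continuity_pt u z) -> (forall z, continuity_pt v z) ->
  is_derive (fun x => RInt (fun xi => u xi * cos (x * xi) - v xi * sin (x * xi)) a b) x
    (RInt (fun xi => - (u xi * xi * sin (x * xi)) - v xi * xi * cos (x * xi)) a b).
Proof.
  intros Hu Hv.
  assert (Hd : forall y xi, Derive (fun z => u xi * cos (z * xi) - v xi * sin (z * xi)) y
                = - (u xi * xi * sin (y * xi)) - v xi * xi * cos (y * xi)).
  { intros y xi. apply is_derive_unique. auto_derive; [exact I | ring]. }
  rewrite <- (RInt_ext (fun xi => Derive (fun z => u xi * cos (z * xi) - v xi * sin (z * xi)) x))
    by (intros; apply Hd).
  apply (is_derive_RInt_param (fun x xi => u xi * cos (x * xi) - v xi * sin (x * xi))).
  - apply filter_forall. intros y xi _. auto_derive. exact I.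
  - intros xi _. eapply continuity_2d_pt_ext; [intros y z; symmetry; apply Hd|].
    assert (Hprod : continuity_2d_pt (fun y z => y * z) x xi)
      by (apply continuity_2d_pt_mult; [apply continuity_2d_pt_id1 | apply continuity_2d_pt_id2]).
    assert (Hcoef : forall f : R -> R, (forall z, continuity_pt f z) ->
              continuity_2d_pt (fun _ z => f z) x xi)
      by (intros f Hf; apply (continuity_1d_2d_pt_comp f (fun _ z => z));
          auto using continuity_2d_pt_id2).
    apply continuity_2d_pt_minus; [apply continuity_2d_pt_opp|];
      repeat apply continuity_2d_pt_mult; auto using continuity_2d_pt_id2.
    + apply (continuity_1d_2d_pt_comp sin (fun y z => y * z)); [apply continuity_sin | exact Hprod].
    + apply (continuity_1d_2d_pt_comp cos (fun y z => y * z)); [apply continuity_cos | exact Hprod].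
  - apply filter_forall. intros y. now apply ex_RInt_cos_sin.
Qed.

Lemma is_derive_invF_re a b u v x :
  (forall z, continuity_pt u z) -> (forall z, continuity_pt v z) ->
  is_derive (invF_re a b u v) x
    (/ (2 * PI) * RInt (fun xi => - (u xi * xi * sin (x * xi)) - v xi * xi * cos (x * xi)) a b).
Proof.
  intros Hu Hv. unfold invF_re.
  apply (is_derive_ext
    (fun x => / (2 * PI) * RInt (fun xi => u xi * cos (x * xi) - v xi * sin (x * xi)) a b)).
  { intros y. rewrite Rint_RInt; [reflexivity | now apply ex_RInt_cos_sin]. }
  apply (is_derive_scal (fun x => RInt (fun xi => u xi * cos (x * xi) - v xi * sin (x * xi)) a b)).
  now apply is_derive_RInt_cos_sin.
Qed.

Lemma invF_im_as_re a b u v x : invF_im a b u v x = invF_re a b v (fun xi => - u xi) x.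
Proof.
  unfold invF_im, invF_re. do 2 f_equal. apply functional_extensionality. intros xi. ring.
Qed.

Lemma Rint_le_const (f : R -> R) a b M : a <= b ->
  (forall z, a <= z <= b -> continuity_pt f z) -> (forall z, a <= z <= b -> 0 <= f z <= M) ->
  Rint f a b <= (b - a) * M.
Proof.
  intros Hab Hc Hf.
  assert (Hex : ex_RInt f a b)
    by (apply ex_RInt_of_continuity; rewrite Rmin_left, Rmax_right; auto).
  rewrite Rint_RInt by exact Hex.
  eapply Rle_trans; [apply Rle_abs | apply abs_RInt_le_const; auto].
  intros z Hz. specialize (Hf z Hz). rewrite Rabs_right; lra.
Qed.

Lemma RInt_ge_on_subinterval (f : R -> R) a a1 b1 b c : a <= a1 -> a1 <= b1 -> b1 <= b ->
  (forall z, a <= z <= b -> continuity_pt f z) -> (forall z, a <= z <= b -> 0 <= f z) ->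
  (forall z, a1 <= z <= b1 -> c <= f z) -> c * (b1 - a1) <= RInt f a b.
Proof.
  intros Ha1 Hab1 Hb1 Hc H0 H1.
  assert (Hex : forall a' b', a <= a' -> a' <= b' -> b' <= b -> ex_RInt f a' b').
  { intros a' b' ? ? ?. apply ex_RInt_of_continuity.
    rewrite Rmin_left, Rmax_right by lra. intros z Hz. apply Hc. lra. }
  rewrite <- (RInt_Chasles (V := R_CompleteNormedModule) f a a1 b) by (apply Hex; lra).
  rewrite <- (RInt_Chasles (V := R_CompleteNormedModule) f a1 b1 b) by (apply Hex; lra).
  unfold plus; simpl.
  assert (0 <= RInt f a a1) by (apply RInt_ge_0; [lra | apply Hex; lra | intros; apply H0; lra]).
  assert (0 <= RInt f b1 b) by (apply RInt_ge_0; [lra | apply Hex; lra | intros; apply H0; lra]).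
  assert (c * (b1 - a1) <= RInt f a1 b1).
  { replace (c * (b1 - a1)) with (RInt (fun _ => c) a1 b1)
      by (rewrite RInt_const; unfold scal; simpl; unfold mult; simpl; ring).
    apply RInt_le; [lra | apply ex_RInt_const | apply Hex; lra |].
    intros z Hz. apply H1. lra. }
  lra.
Qed.

Lemma cos_sin_opposite_phase a xi : cos (a * xi) * cos (- a * xi) - sin (a * xi) * sin (- a * xi) = 1.
Proof.
  rewrite Ropp_mult_distr_l_reverse, cos_neg, sin_neg.
  pose proof (sin2_cos2 (a * xi)) as H. unfold Rsqr in H. lra.
Qed.

Lemma cmod_ge_abs_l x y : Rabs x <= cmod x y.
Proof. unfold cmod. rewrite <- sqrt_Rsqr_abs. apply sqrt_le_1_alt. unfold Rsqr. nra. Qed.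

Lemma cmod_ge_abs_r x y : Rabs y <= cmod x y.
Proof. unfold cmod. rewrite <- sqrt_Rsqr_abs. apply sqrt_le_1_alt. unfold Rsqr. nra. Qed.

Lemma jb_ge z : 0 <= z -> z <= jb z.
Proof.
  intros Hz. unfold jb. rewrite <- (sqrt_pow2 z Hz) at 1. apply sqrt_le_1_alt. lra.
Qed.

(** * The counterexample *)

Section Counterexample.

Variable N : R.
Hypothesis HN : 1 <= N.

Lemma invN_pos : 0 < / N.
Proof. apply Rinv_0_lt_compat; lra. Qed.

Lemma invN_le_1 : / N <= 1.
Proof. rewrite <- Rinv_1. apply Rinv_le_contravar; lra. Qed.

Definition bump_at : nat -> R -> R := affine_tower N (- (N * N)) bump.

Lemma bump_at_smooth : smooth_tower bump_at.
Proof. apply affine_tower_smooth, bump_smooth. Qed.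

Lemma bump_at0 x : bump_at 0 x = bump 0 (N * (x - N)).
Proof. unfold bump_at. rewrite affine_tower0. f_equal. ring. Qed.

Lemma bump_at1 x : bump_at 1 x = N * bump 1 (N * (x - N)).
Proof. unfold bump_at, affine_tower. simpl. rewrite Rmult_1_r. do 2 f_equal. ring. Qed.

Lemma bump_at_range x : 0 <= bump_at 0 x <= 1.
Proof. rewrite bump_at0. apply bump_range. Qed.

Lemma bump_at_eq0 x : x <= N \/ N + / N <= x -> bump_at 0 x = 0.
Proof.
  intros Hx. rewrite bump_at0. apply bump_eq0. pose proof invN_pos.
  destruct Hx as [Hx|Hx]; [left; nra | right].
  replace 1 with (N * / N) by (field; lra). apply Rmult_le_compat_l; lra.
Qed.

Lemma bump_at_ge x : N + / (4 * N) <= x <= N + 3 / (4 * N) -> exp (-8) <= bump_at 0 x.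
Proof.
  intros Hx. rewrite bump_at0. apply bump_ge.
  replace (1 / 4) with (N * / (4 * N)) by (field; lra).
  replace (3 / 4) with (N * (3 / (4 * N))) by (field; lra).
  split; apply Rmult_le_compat_l; lra.
Qed.

Definition hat_re : nat -> R -> R := mul_tower bump_at (affine_tower (N ^ 3) 0 cos_tower).
Definition hat_im : nat -> R -> R := mul_tower bump_at (affine_tower (N ^ 3) (- (PI / 2)) cos_tower).

Lemma hat_re_smooth : smooth_tower hat_re.
Proof. apply mul_tower_smooth, affine_tower_smooth, cos_tower_smooth. apply bump_at_smooth. Qed.

Lemma hat_im_smooth : smooth_tower hat_im.
Proof. apply mul_tower_smooth, affine_tower_smooth, cos_tower_smooth. apply bump_at_smooth. Qed.

Lemma hat_re0 x : hat_re 0 x = bump_at 0 x * cos (N ^ 3 * x).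
Proof. unfold hat_re. now rewrite mul_tower0, affine_tower0, cos_tower0, Rplus_0_r. Qed.

Lemma hat_im0 x : hat_im 0 x = bump_at 0 x * sin (N ^ 3 * x).
Proof.
  unfold hat_im. now rewrite mul_tower0, affine_tower0, cos_tower0, <- cos_sub_PI2.
Qed.

Lemma hat_support xi : xi < N \/ N + / N < xi -> hat_re 0 xi = 0 /\ hat_im 0 xi = 0.
Proof.
  intros Hxi. rewrite hat_re0, hat_im0, bump_at_eq0 by lra. split; ring.
Qed.

Definition phase (x : R) : R := N ^ 5 / x + N ^ 3 * x.
Definition phase_deriv (x : R) : R := N ^ 3 - N ^ 5 / (x * x).

Lemma prop_re_hat x : prop_re (N ^ 5) (hat_re 0) (hat_im 0) x = bump_at 0 x * cos (phase x).
Proof. unfold prop_re, phase. rewrite hat_re0, hat_im0, cos_plus. ring. Qed.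

Lemma prop_im_hat x : prop_im (N ^ 5) (hat_re 0) (hat_im 0) x = bump_at 0 x * sin (phase x).
Proof. unfold prop_im, phase. rewrite hat_re0, hat_im0, sin_plus. ring. Qed.

Lemma prop_hat_sqr x :
  prop_re (N ^ 5) (hat_re 0) (hat_im 0) x ^ 2 + prop_im (N ^ 5) (hat_re 0) (hat_im 0) x ^ 2
  = bump_at 0 x ^ 2.
Proof.
  rewrite prop_re_hat, prop_im_hat. pose proof (sin2_cos2 (phase x)) as H. unfold Rsqr in H.
  transitivity (bump_at 0 x ^ 2 * (sin (phase x) * sin (phase x) + cos (phase x) * cos (phase x)));
    [ring | rewrite H; ring].
Qed.

(* Fourier side of [x d_x U(-t) phi] (up to sign): the derivative of [xi (U(-t) phi)^(xi)].
   The phase is singular at 0, hence the case split; both sides vanish for [xi < N]. *)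
Definition xderiv_re (x : R) : R :=
  if Rlt_dec 0 x then
    (bump_at 0 x + x * bump_at 1 x) * cos (phase x) - x * bump_at 0 x * phase_deriv x * sin (phase x)
  else 0.

Definition xderiv_im (x : R) : R :=
  if Rlt_dec 0 x then
    (bump_at 0 x + x * bump_at 1 x) * sin (phase x) + x * bump_at 0 x * phase_deriv x * cos (phase x)
  else 0.

Lemma is_derive_vanishing_below (f : R -> R) x : x < N -> (forall y, y < N -> f y = 0) ->
  is_derive f x 0.
Proof.
  intros Hx Hf. apply (is_derive_ext_loc (fun _ => 0)); [|apply (is_derive_const 0 x)].
  apply (filter_imp (fun u => u < N)); [|exact (open_lt N x Hx)].
  intros u Hu. symmetry. now apply Hf.
Qed.

Lemma is_derive_xderiv_re x :
  derivable_pt_lim (fun z => z * prop_re (N ^ 5) (hat_re 0) (hat_im 0) z) x (xderiv_re x).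
Proof.
  apply is_derive_Reals. unfold xderiv_re. destruct (Rlt_dec 0 x) as [Hx|Hx].
  - apply (is_derive_ext (fun z => z * (bump_at 0 z * cos (N ^ 5 / z + N ^ 3 * z))));
      [intros z; now rewrite prop_re_hat|].
    eapply is_derive_eq;
      [auto_derive; [repeat split; [apply smooth_tower_ex_derive, bump_at_smooth | lra] | reflexivity]|].
    rewrite Derive_smooth_tower by apply bump_at_smooth.
    unfold phase, phase_deriv, Rdiv; simpl. field. lra.
  - apply is_derive_vanishing_below; [lra|]. intros y Hy.
    rewrite prop_re_hat, bump_at_eq0 by lra. ring.
Qed.

Lemma is_derive_xderiv_im x :
  derivable_pt_lim (fun z => z * prop_im (N ^ 5) (hat_re 0) (hat_im 0) z) x (xderiv_im x).
Proof.
  apply is_derive_Reals. unfold xderiv_im. destruct (Rlt_dec 0 x) as [Hx|Hx].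
  - apply (is_derive_ext (fun z => z * (bump_at 0 z * sin (N ^ 5 / z + N ^ 3 * z))));
      [intros z; now rewrite prop_im_hat|].
    eapply is_derive_eq;
      [auto_derive; [repeat split; [apply smooth_tower_ex_derive, bump_at_smooth | lra] | reflexivity]|].
    rewrite Derive_smooth_tower by apply bump_at_smooth.
    unfold phase, phase_deriv, Rdiv; simpl. field. lra.
  - apply is_derive_vanishing_below; [lra|]. intros y Hy.
    rewrite prop_im_hat, bump_at_eq0 by lra. ring.
Qed.

Lemma phase_deriv_range x : N <= x <= N + / N -> 0 <= phase_deriv x <= 3 * N.
Proof.
  intros [H1 H2]. pose proof invN_pos. pose proof invN_le_1.
  assert (Hsq : 0 <= x * x - N * N <= 3).
  { replace (x * x - N * N) with ((x - N) * (x + N)) by ring.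
    split; [nra|]. apply Rle_trans with (/ N * (3 * N)); [apply Rmult_le_compat; lra|].
    right. field. lra. }
  replace (phase_deriv x) with (N ^ 3 * (x * x - N * N) / (x * x))
    by (unfold phase_deriv; field; lra).
  assert (Hinv : / (x * x) <= / (N * N)) by (apply Rinv_le_contravar; nra).
  assert (0 < / (x * x)) by (apply Rinv_0_lt_compat; nra).
  assert (0 < N ^ 3) by (apply pow_lt; lra).
  unfold Rdiv. split; [apply Rmult_le_pos; nra|].
  apply Rle_trans with (N ^ 3 * (x * x - N * N) * / (N * N)); [apply Rmult_le_compat_l; nra|].
  replace (N ^ 3 * (x * x - N * N) * / (N * N)) with (N * (x * x - N * N)) by (field; lra).
  nra.
Qed.

Lemma xderiv_sqr x : 0 < x ->
  xderiv_re x ^ 2 + xderiv_im x ^ 2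
  = (bump_at 0 x + x * bump_at 1 x) ^ 2 + (x * bump_at 0 x * phase_deriv x) ^ 2.
Proof.
  intros Hx. unfold xderiv_re, xderiv_im. destruct (Rlt_dec 0 x) as [_|]; [|lra].
  pose proof (sin2_cos2 (phase x)) as H. unfold Rsqr in H.
  set (u := bump_at 0 x + x * bump_at 1 x). set (v := x * bump_at 0 x * phase_deriv x).
  transitivity ((u ^ 2 + v ^ 2) * (sin (phase x) * sin (phase x) + cos (phase x) * cos (phase x)));
    [ring | rewrite H; ring].
Qed.

Lemma xderiv_continuous z : 0 < z ->
  continuity_pt (fun xi => xderiv_re xi ^ 2 + xderiv_im xi ^ 2) z.
Proof.
  intros Hz.
  apply (continuity_pt_ext_loc (fun xi =>
    (bump_at 0 xi + xi * bump_at 1 xi) ^ 2 + (xi * bump_at 0 xi * phase_deriv xi) ^ 2)).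
  - apply (filter_imp (fun u => 0 < u)); [|exact (open_gt 0 z Hz)].
    intros u Hu. symmetry. now apply xderiv_sqr.
  - apply continuity_pt_of_ex_derive. unfold phase_deriv.
    auto_derive. repeat split; try apply smooth_tower_ex_derive, bump_at_smooth; nra.
Qed.

Lemma Hs_integrand_continuous s z :
  continuity_pt (fun xi => Rpower (1 + xi ^ 2) s *
    (prop_re (N ^ 5) (hat_re 0) (hat_im 0) xi ^ 2 + prop_im (N ^ 5) (hat_re 0) (hat_im 0) xi ^ 2)) z.
Proof.
  apply (continuity_pt_ext (fun xi => exp (s * ln (1 + xi ^ 2)) * bump_at 0 xi ^ 2)).
  { intros xi. now rewrite prop_hat_sqr. }
  apply continuity_pt_of_ex_derive. auto_derive.
  repeat split; try apply smooth_tower_ex_derive, bump_at_smooth. pose proof (pow2_ge_0 z). lra.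
Qed.

Lemma Hs_norm_bound s : 0 < s ->
  Hs_norm N (N + / N) s (prop_re (N ^ 5) (hat_re 0) (hat_im 0)) (prop_im (N ^ 5) (hat_re 0) (hat_im 0))
  <= sqrt (/ N * Rpower (5 * N ^ 2) s).
Proof.
  intros Hs. pose proof invN_pos. pose proof invN_le_1. unfold Hs_norm. apply sqrt_le_1_alt.
  replace (/ N * Rpower (5 * N ^ 2) s) with ((N + / N - N) * Rpower (5 * N ^ 2) s) by ring.
  apply Rint_le_const; [lra | intros; apply Hs_integrand_continuous |].
  intros z Hz. rewrite prop_hat_sqr. pose proof (bump_at_range z).
  assert (0 < Rpower (1 + z ^ 2) s) by apply exp_pos.
  assert (Rpower (1 + z ^ 2) s <= Rpower (5 * N ^ 2) s)
    by (apply Rle_Rpower_l; [lra | split; [pose proof (pow2_ge_0 z) |]; simpl; nra]).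
  split; [apply Rmult_le_pos; [lra | apply pow2_ge_0]|].
  apply Rle_trans with (Rpower (1 + z ^ 2) s * 1); [apply Rmult_le_compat_l; [lra | simpl; nra] | lra].
Qed.

Lemma RInt_weighted_bump_at_ge (f : R -> R) :
  (forall z, continuity_pt f z) -> (forall z, N <= z -> N <= f z) ->
  exp (-8) / 2 <= RInt (fun xi => f xi * bump_at 0 xi) N (N + / N).
Proof.
  intros Hc Hf. pose proof invN_pos. pose proof (exp_pos (-8)).
  assert (0 < / (4 * N)) by (apply Rinv_0_lt_compat; lra).
  replace (exp (-8) / 2) with (N * exp (-8) * (N + 3 / (4 * N) - (N + / (4 * N)))) by (field; lra).
  apply RInt_ge_on_subinterval.
  - lra.
  - unfold Rdiv. lra.
  - replace (/ N) with (4 * / (4 * N)) by (field; lra). unfold Rdiv. lra.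
  - intros z _. apply continuity_pt_mult; [apply Hc | apply smooth_tower_continuous, bump_at_smooth].
  - intros z Hz. pose proof (Hf z (proj1 Hz)). pose proof (bump_at_range z). nra.
  - intros z Hz. assert (N <= z) by (unfold Rdiv in Hz; lra).
    pose proof (Hf z ltac:(lra)). pose proof (bump_at_ge z Hz). apply Rmult_le_compat; lra.
Qed.

Lemma invF_deriv_lower : exists dr di : R,
  derivable_pt_lim (invF_re N (N + / N) (hat_re 0) (hat_im 0)) (- N ^ 3) dr /\
  derivable_pt_lim (invF_im N (N + / N) (hat_re 0) (hat_im 0)) (- N ^ 3) di /\
  exp (-8) / (4 * PI) <= cmod dr di.
Proof.
  pose proof PI2_1.
  assert (Hre : forall z, continuity_pt (hat_re 0) z)
    by (intros; apply smooth_tower_continuous, hat_re_smooth).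
  assert (Him : forall z, continuity_pt (hat_im 0) z)
    by (intros; apply smooth_tower_continuous, hat_im_smooth).
  eexists _, _. split; [|split].
  - apply is_derive_Reals, is_derive_invF_re; auto.
  - apply is_derive_Reals.
    apply (is_derive_ext (invF_re N (N + / N) (hat_im 0) (fun xi => - hat_re 0 xi)));
      [intros; symmetry; apply invF_im_as_re|].
    apply is_derive_invF_re; [auto | intros; now apply continuity_pt_opp].
  - eapply Rle_trans; [|apply cmod_ge_abs_r]. eapply Rle_trans; [|apply Rle_abs].
    rewrite (RInt_ext _ (fun xi => xi * bump_at 0 xi)).
    2:{ intros xi _. rewrite hat_re0, hat_im0, <- (Rmult_1_r (xi * bump_at 0 xi)),
          <- (cos_sin_opposite_phase (N ^ 3) xi). simpl. ring. }
    replace (exp (-8) / (4 * PI)) with (/ (2 * PI) * (exp (-8) / 2)) by (field; lra).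
    apply Rmult_le_compat_l; [apply Rlt_le, Rinv_0_lt_compat; lra|].
    apply RInt_weighted_bump_at_ge; [apply continuity_pt_id | intros; lra].
Qed.

Lemma invF_bracket_lower :
  exp (-8) / (4 * PI) <=
  cmod (invF_re N (N + / N) (fun xi => jb xi * hat_re 0 xi) (fun xi => jb xi * hat_im 0 xi) (- N ^ 3))
       (invF_im N (N + / N) (fun xi => jb xi * hat_re 0 xi) (fun xi => jb xi * hat_im 0 xi) (- N ^ 3)).
Proof.
  pose proof PI2_1.
  assert (Hjb : forall z, continuity_pt jb z).
  { intros z. apply continuity_pt_of_ex_derive. unfold jb. auto_derive.
    pose proof (pow2_ge_0 z). simpl in *. nra. }
  eapply Rle_trans; [|apply cmod_ge_abs_l]. eapply Rle_trans; [|apply Rle_abs].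
  unfold invF_re.
  replace (fun xi =>
    jb xi * hat_re 0 xi * cos (- N ^ 3 * xi) - jb xi * hat_im 0 xi * sin (- N ^ 3 * xi))
    with (fun xi => jb xi * bump_at 0 xi).
  2:{ apply functional_extensionality. intros xi.
      rewrite hat_re0, hat_im0, <- (Rmult_1_r (jb xi * bump_at 0 xi)),
        <- (cos_sin_opposite_phase (N ^ 3) xi). ring. }
  rewrite Rint_RInt.
  2:{ apply ex_RInt_of_continuity. intros z _. apply continuity_pt_mult; [apply Hjb|].
      apply smooth_tower_continuous, bump_at_smooth. }
  replace (exp (-8) / (4 * PI)) with (/ (2 * PI) * (exp (-8) / 2)) by (field; lra).
  apply Rmult_le_compat_l; [apply Rlt_le, Rinv_0_lt_compat; lra|].
  apply RInt_weighted_bump_at_ge; [exact Hjb|]. intros z Hz. apply Rle_trans with z; [lra|].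
  apply jb_ge. lra.
Qed.

Variable M : R.
Hypothesis HM : forall y, 0 <= y <= 1 -> Rabs (bump 1 y) <= M.

Lemma bump_at1_bound x : N <= x <= N + / N -> Rabs (bump_at 1 x) <= N * M.
Proof.
  intros Hx. pose proof invN_pos. rewrite bump_at1, Rabs_mult, Rabs_right by lra.
  apply Rmult_le_compat_l; [lra|]. apply HM. split; [nra|].
  replace 1 with (N * / N) by (field; lra). apply Rmult_le_compat_l; lra.
Qed.

Lemma xderiv_sqr_bound x : N <= x <= N + / N ->
  xderiv_re x ^ 2 + xderiv_im x ^ 2 <= ((1 + 2 * M) ^ 2 + 36) * N ^ 4.
Proof.
  intros Hx. pose proof invN_le_1.
  assert (HM0 : 0 <= M) by (pose proof (HM 0 ltac:(lra)); pose proof (Rabs_pos (bump 1 0)); lra).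
  rewrite xderiv_sqr by lra.
  pose proof (bump_at_range x). pose proof (bump_at1_bound x Hx). pose proof (phase_deriv_range x Hx).
  assert (Hu : Rabs (bump_at 0 x + x * bump_at 1 x) <= N ^ 2 * (1 + 2 * M)).
  { eapply Rle_trans; [apply Rabs_triang|].
    rewrite Rabs_mult, (Rabs_right x), (Rabs_right (bump_at 0 x)) by lra.
    apply Rle_trans with (1 + 2 * N * (N * M)); [|simpl; nra].
    apply Rplus_le_compat; [lra|]. apply Rmult_le_compat; [lra | apply Rabs_pos | lra | lra]. }
  assert (Hv : Rabs (x * bump_at 0 x * phase_deriv x) <= 6 * N ^ 2).
  { rewrite !Rabs_mult, (Rabs_right x), (Rabs_right (bump_at 0 x)), (Rabs_right (phase_deriv x)) by lra.
    apply Rle_trans with (2 * N * 1 * (3 * N)); [|simpl; nra].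
    apply Rmult_le_compat; [nra | lra | apply Rmult_le_compat | ]; lra. }
  rewrite <- (pow2_abs (bump_at 0 x + x * bump_at 1 x)),
    <- (pow2_abs (x * bump_at 0 x * phase_deriv x)).
  assert (0 <= N ^ 2) by apply pow2_ge_0.
  pose proof (Rabs_pos (bump_at 0 x + x * bump_at 1 x)).
  pose proof (Rabs_pos (x * bump_at 0 x * phase_deriv x)).
  replace (((1 + 2 * M) ^ 2 + 36) * N ^ 4) with ((N ^ 2 * (1 + 2 * M)) ^ 2 + (6 * N ^ 2) ^ 2) by ring.
  apply Rplus_le_compat; apply pow_incr; lra.
Qed.

Lemma L2_norm_bound : L2_norm N (N + / N) xderiv_re xderiv_im <= sqrt (((1 + 2 * M) ^ 2 + 36) * N ^ 3).
Proof.
  pose proof invN_pos. unfold L2_norm. apply sqrt_le_1_alt.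
  replace (((1 + 2 * M) ^ 2 + 36) * N ^ 3) with ((N + / N - N) * (((1 + 2 * M) ^ 2 + 36) * N ^ 4))
    by (simpl; field; lra).
  apply Rint_le_const; [lra | intros; apply xderiv_continuous; lra |].
  intros z Hz. pose proof (pow2_ge_0 (xderiv_re z)). pose proof (pow2_ge_0 (xderiv_im z)).
  split; [lra|].
  now apply xderiv_sqr_bound.
Qed.

End Counterexample.

(** * Asymptotics *)

Lemma exp_le x y : x <= y -> exp x <= exp y.
Proof. intros [H| ->]; [apply Rlt_le, exp_increasing, H | apply Rle_refl]. Qed.

Lemma exp_pow T k : exp T ^ k = exp (INR k * T).
Proof.
  induction k as [|k IH]; simpl; [now rewrite Rmult_0_l, exp_0|].
  rewrite IH, <- exp_plus. f_equal. destruct k; simpl; ring.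
Qed.

Lemma sqrt_exp v : sqrt (exp v) = exp (v / 2).
Proof.
  rewrite <- (sqrt_square (exp (v / 2))) by apply Rlt_le, exp_pos.
  f_equal. rewrite <- exp_plus. f_equal. field.
Qed.

Lemma rpow_nonneg x p : 0 <= rpow x p.
Proof. unfold rpow. destruct Rle_dec; [lra | apply Rlt_le, exp_pos]. Qed.

Lemma rpow_le_exp x U p : 0 < p -> x <= exp U -> rpow x p <= exp (p * U).
Proof.
  intros Hp Hx. unfold rpow. destruct (Rle_dec x 0); [apply Rlt_le, exp_pos|].
  unfold Rpower. apply exp_le. apply Rmult_le_compat_l; [lra|].
  rewrite <- (ln_exp U). apply ln_le; lra.
Qed.

Lemma exp_affine_eventually_lt alpha a eps : 0 < alpha -> 0 < eps ->
  exists T0, forall T, T0 <= T -> exp (- alpha * T + a) < eps.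
Proof.
  intros Ha He. exists ((a - ln eps) / alpha + 1). intros T HT.
  rewrite <- (exp_ln eps He). apply exp_increasing.
  apply Rmult_le_compat_l with (r := alpha) in HT; [|lra].
  replace (alpha * ((a - ln eps) / alpha + 1)) with (a - ln eps + alpha) in HT by (field; lra).
  lra.
Qed.

Definition hn_rhs (rho C t a b : R) (Hr Hi pr pi : R -> R) : R :=
  C * ( / sqrt t * rpow (/ sqrt (2 * PI) * L2_norm a b Hr Hi) (1 / 2 + rho)
          * rpow (Hs_norm a b ((2 - 2 * rho) / (1 - 2 * rho)) pr pi) (1 / 2 - rho)
        + / sqrt t * Hs_norm a b (5 / 2) pr pi).

Section Asymptotics.

Variables (T M : R).
Hypothesis HT : 0 <= T.
Hypothesis HM : forall y, 0 <= y <= 1 -> Rabs (bump 1 y) <= M.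

Let N := exp T.
Let K := (1 + 2 * M) ^ 2 + 36.

Lemma one_le_N : 1 <= N.
Proof. unfold N. rewrite <- exp_0. now apply exp_le. Qed.

Lemma inv_sqrt_time : / sqrt (N ^ 5) = exp (- (5 * T / 2)).
Proof. unfold N. rewrite exp_pow, sqrt_exp, <- exp_Ropp. f_equal. simpl. field. Qed.

Lemma L2_norm_exp_bound :
  / sqrt (2 * PI) * L2_norm N (N + / N) (xderiv_re N) (xderiv_im N) <= exp ((ln K + 3 * T) / 2).
Proof.
  pose proof PI2_1.
  assert (Hpi : 1 <= sqrt (2 * PI)) by (rewrite <- sqrt_1; apply sqrt_le_1_alt; lra).
  assert (0 < / sqrt (2 * PI) <= 1)
    by (split; [apply Rinv_0_lt_compat | rewrite <- Rinv_1; apply Rinv_le_contravar]; lra).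
  assert (0 <= L2_norm N (N + / N) (xderiv_re N) (xderiv_im N)) by apply sqrt_pos.
  apply Rle_trans with (L2_norm N (N + / N) (xderiv_re N) (xderiv_im N)); [nra|].
  eapply Rle_trans; [exact (L2_norm_bound N one_le_N M HM)|].
  right. rewrite <- sqrt_exp. f_equal. fold K.
  rewrite exp_plus, exp_ln by (unfold K; pose proof (pow2_ge_0 (1 + 2 * M)); lra).
  unfold N. rewrite exp_pow. do 2 f_equal. simpl. ring.
Qed.

Lemma Hs_norm_exp_bound s : 0 < s ->
  Hs_norm N (N + / N) s
    (prop_re (N ^ 5) (hat_re N 0) (hat_im N 0)) (prop_im (N ^ 5) (hat_re N 0) (hat_im N 0))
  <= exp ((- T + s * (ln 5 + 2 * T)) / 2).
Proof.
  intros Hs. eapply Rle_trans; [exact (Hs_norm_bound N one_le_N s Hs)|].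
  right. rewrite <- sqrt_exp. f_equal. unfold Rpower, N.
  rewrite ln_mult by (try lra; apply pow_lt, exp_pos).
  rewrite exp_pow, ln_exp, <- exp_Ropp, <- exp_plus. reflexivity.
Qed.

Variables (rho C : R).
Hypotheses (hrho0 : 0 < rho) (hrho1 : rho < 1 / 2) (HC : 0 < C).

Lemma hn_rhs_exp_bound :
  hn_rhs rho C (N ^ 5) N (N + / N) (xderiv_re N) (xderiv_im N)
    (prop_re (N ^ 5) (hat_re N 0) (hat_im N 0)) (prop_im (N ^ 5) (hat_re N 0) (hat_im N 0))
  <= C * (exp (- (1 - rho) * T + ((1 / 2 + rho) * ln K + (1 - rho) * ln 5) / 2)
          + exp (- (1 / 2) * T + 5 / 4 * ln 5)).
Proof.
  set (s := (2 - 2 * rho) / (1 - 2 * rho)).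
  assert (Hs : 0 < s) by (apply Rdiv_lt_0_compat; lra).
  (* This is why the H^s exponent is (2 - 2 rho) / (1 - 2 rho): the first term is O(N^{rho - 1}). *)
  assert (Hse : (1 / 2 - rho) * s = 1 - rho) by (unfold s; field; lra).
  pose proof (rpow_le_exp _ _ (1 / 2 + rho) ltac:(lra) L2_norm_exp_bound) as R1.
  pose proof (rpow_le_exp _ _ (1 / 2 - rho) ltac:(lra) (Hs_norm_exp_bound s Hs)) as R2.
  pose proof (Hs_norm_exp_bound (5 / 2) ltac:(lra)) as R3.
  unfold hn_rhs. fold s. rewrite inv_sqrt_time.
  apply Rmult_le_compat_l; [lra|]. apply Rplus_le_compat.
  - eapply Rle_trans.
    + apply Rmult_le_compat; [apply Rmult_le_pos; [apply Rlt_le, exp_pos | apply rpow_nonneg]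
        | apply rpow_nonneg | apply Rmult_le_compat_l; [apply Rlt_le, exp_pos | exact R1] | exact R2].
    + right. rewrite <- !exp_plus. f_equal.
      transitivity (- (5 * T / 2) + (1 / 2 + rho) * ((ln K + 3 * T) / 2)
        + ((1 / 2 - rho) * s * (ln 5 + 2 * T) - (1 / 2 - rho) * T) / 2); [field|].
      rewrite Hse. field.
  - eapply Rle_trans; [apply Rmult_le_compat_l; [apply Rlt_le, exp_pos | exact R3]|].
    right. rewrite <- exp_plus. f_equal. field.
Qed.

End Asymptotics.

Lemma hn_rhs_small rho C : 0 < rho -> rho < 1 / 2 -> 0 < C ->
  exists N, 1 <= N /\
  hn_rhs rho C (N ^ 5) N (N + / N) (xderiv_re N) (xderiv_im N)
    (prop_re (N ^ 5) (hat_re N 0) (hat_im N 0)) (prop_im (N ^ 5) (hat_re N 0) (hat_im N 0))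
  < exp (-8) / (4 * PI).
Proof.
  intros hrho0 hrho1 HC. pose proof PI2_1. destruct bump_deriv_bounded as [M HM].
  set (eps := exp (-8) / (8 * PI * C)).
  assert (He : 0 < eps) by (apply Rdiv_lt_0_compat; [apply exp_pos | nra]).
  destruct (exp_affine_eventually_lt (1 - rho)
    (((1 / 2 + rho) * ln ((1 + 2 * M) ^ 2 + 36) + (1 - rho) * ln 5) / 2) eps ltac:(lra) He) as [T1 H1].
  destruct (exp_affine_eventually_lt (1 / 2) (5 / 4 * ln 5) eps ltac:(lra) He) as [T2 H2].
  set (T := Rmax 0 (Rmax T1 T2)).
  assert (HT0 : 0 <= T) by apply Rmax_l.
  assert (HT1 : T1 <= T) by (eapply Rle_trans; [apply Rmax_l | apply Rmax_r]).
  assert (HT2 : T2 <= T) by (eapply Rle_trans; [apply Rmax_r | apply Rmax_r]).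
  exists (exp T). split; [now apply one_le_N|].
  eapply Rle_lt_trans; [now apply hn_rhs_exp_bound with (M := M)|].
  specialize (H1 T HT1). specialize (H2 T HT2).
  apply Rlt_le_trans with (C * (eps + eps)); [apply Rmult_lt_compat_l; lra|].
  right. unfold eps. field. lra.
Qed.

Theorem mainTheorem11 (rho : R) (hrho0 : 0 < rho) (hrho1 : rho < 1 / 2) :
  (~ exists C : R, 0 < C /\
     forall (t : R), 1 <= t ->
     forall (gr gi : nat -> R -> R) (a b : R),
       0 < a -> a < b -> smooth_tower gr -> smooth_tower gi ->
       (forall xi, xi < a \/ b < xi -> gr 0%nat xi = 0 /\ gi 0%nat xi = 0) ->
     forall (Hr Hi : R -> R),
       (forall xi, derivable_pt_lim
          (fun z => z * prop_re t (gr 0%nat) (gi 0%nat) z) xi (Hr xi)) ->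
       (forall xi, derivable_pt_lim
          (fun z => z * prop_im t (gr 0%nat) (gi 0%nat) z) xi (Hi xi)) ->
     forall (x dr di : R),
       derivable_pt_lim (invF_re a b (gr 0%nat) (gi 0%nat)) x dr ->
       derivable_pt_lim (invF_im a b (gr 0%nat) (gi 0%nat)) x di ->
       cmod dr di <=
       C * ( / sqrt t
               * rpow (/ sqrt (2 * PI) * L2_norm a b Hr Hi) (1 / 2 + rho)
               * rpow (Hs_norm a b ((2 - 2 * rho) / (1 - 2 * rho))
                         (prop_re t (gr 0%nat) (gi 0%nat))
                         (prop_im t (gr 0%nat) (gi 0%nat))) (1 / 2 - rho)
             + / sqrt t
               * Hs_norm a b (5 / 2)
                         (prop_re t (gr 0%nat) (gi 0%nat))
                         (prop_im t (gr 0%nat) (gi 0%nat))))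
  /\
  (~ exists C : R, 0 < C /\
     forall (t : R), 1 <= t ->
     forall (gr gi : nat -> R -> R) (a b : R),
       0 < a -> a < b -> smooth_tower gr -> smooth_tower gi ->
       (forall xi, xi < a \/ b < xi -> gr 0%nat xi = 0 /\ gi 0%nat xi = 0) ->
     forall (Hr Hi : R -> R),
       (forall xi, derivable_pt_lim
          (fun z => z * prop_re t (gr 0%nat) (gi 0%nat) z) xi (Hr xi)) ->
       (forall xi, derivable_pt_lim
          (fun z => z * prop_im t (gr 0%nat) (gi 0%nat) z) xi (Hi xi)) ->
     forall (x : R),
       cmod (invF_re a b (fun xi => jb xi * gr 0%nat xi) (fun xi => jb xi * gi 0%nat xi) x)
            (invF_im a b (fun xi => jb xi * gr 0%nat xi) (fun xi => jb xi * gi 0%nat xi) x) <=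
       C * ( / sqrt t
               * rpow (/ sqrt (2 * PI) * L2_norm a b Hr Hi) (1 / 2 + rho)
               * rpow (Hs_norm a b ((2 - 2 * rho) / (1 - 2 * rho))
                         (prop_re t (gr 0%nat) (gi 0%nat))
                         (prop_im t (gr 0%nat) (gi 0%nat))) (1 / 2 - rho)
             + / sqrt t
               * Hs_norm a b (5 / 2)
                         (prop_re t (gr 0%nat) (gi 0%nat))
                         (prop_im t (gr 0%nat) (gi 0%nat)))).
Proof.
  split; intros [C [HC Hbound]];
    destruct (hn_rhs_small rho C hrho0 hrho1 HC) as [N [HN Hsmall]]; unfold hn_rhs in Hsmall;
    assert (HN5 : 1 <= N ^ 5) by (apply pow_R1_Rle; lra);
    assert (HNN : N < N + / N) by (pose proof (invN_pos N HN); lra);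
    specialize (Hbound (N ^ 5) HN5 (hat_re N) (hat_im N) N (N + / N) ltac:(lra) HNN
      (hat_re_smooth N) (hat_im_smooth N) (hat_support N HN) (xderiv_re N) (xderiv_im N)
      (is_derive_xderiv_re N HN) (is_derive_xderiv_im N HN) (- N ^ 3)).
  - destruct (invF_deriv_lower N HN) as (dr & di & Hdr & Hdi & Hlow).
    specialize (Hbound dr di Hdr Hdi). lra.
  - pose proof (invF_bracket_lower N HN). lra.
Qed.
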